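(* Let $X$ be a finite set with $|X|\ge5$, $k$ an integer with $5<k<|X|-5$, $\mathfrak{C}$ a nonempty symmetric family of choice functions for $\binom{X}{k}$, $\mathcal{F}$ the set of simple averaging functions for $\mathfrak{C}$, and assume $r(\mathcal{F})=2$. Let $a^*_1\ne a^*_2$ be elements of $X$ and $\bar a^*=(a^*_1,a^*_2)$. Then there are $f\in\mathcal{F}_{[2]}$ and $\bar b=(b_1,b_2)\in X^2$ such that $f(\bar a^* )=a^*_2$, the sequence $(a^*_1,a^*_2,b_1,b_2)$ is without repetition, and $f(\bar b)=b_1\ne b_2$.
   Context: $\binom{X}{k}=\{Y\subseteq X:|Y|=k\}$; choice functions satisfy $c(Y)\in Y$. Symmetric: closed under $c\mapsto\pi*c$, $(\pi*c)(Y)=\pi^{-1}(c(\pi(Y)))$. $\mathcal{F}_{[r]}$: functions $f:X^r\to X$ with $f(a,\dots,a)=a$ such that for all $c_1,\dots,c_r\in\mathfrak{C}$, $Y\mapsto f(c_1(Y),\dots,c_r(Y))$ is in $\mathfrak{C}$. A monarchy is a projection. $r(\mathcal{F})=\min\{r:\text{some } f\in\mathcal{F}_{[r]}\text{ is not a monarchy}\}$. *)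

From mathcomp Require Import all_boot all_fingroup.
Set Implicit Arguments. Unset Strict Implicit. Unset Printing Implicit Defensive.

Section ChoiceFunctions.
Variables (X : finType) (k : nat).

Definition kset := {Y : {set X} | #|Y| == k}.

Definition kfun := {ffun kset -> X}.

Definition is_choice_fun (c : kfun) : Prop := forall Y : kset, c Y \in val Y.

(* pi(Y) as an element of binom(X,k); the default Y is never used since
   permutations preserve cardinality. *)
Definition kset_perm (pi : {perm X}) (Y : kset) : kset :=
  insubd Y (pi @: val Y).

Definition perm_act (pi : {perm X}) (c : kfun) : kfun :=
  [ffun Y => (pi^-1)%g (c (kset_perm pi Y))].

Definition symmetric_family (C : {set kfun}) : Prop :=
  forall (pi : {perm X}) (c : kfun), c \in C -> perm_act pi c \in C.

Definition in_F (C : {set kfun}) (r : nat) (f : r.-tuple X -> X) : Prop :=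
  (forall a : X, f (nseq_tuple r a) = a) /\
  (forall cs : r.-tuple kfun, (forall i : 'I_r, tnth cs i \in C) ->
     [ffun Y => f (map_tuple (fun c : kfun => c Y) cs)] \in C).

Definition monarchy (r : nat) (f : r.-tuple X -> X) : Prop :=
  exists i : 'I_r, forall x : r.-tuple X, f x = tnth x i.

(* r(F) = n, where r(F) = min { r >= 1 : some f in F_[r] is not a monarchy }. *)
Definition rF_eq (C : {set kfun}) (n : nat) : Prop :=
  0 < n /\
  (exists f : n.-tuple X -> X, in_F C f /\ ~ monarchy f) /\
  (forall m, 0 < m < n -> forall f : m.-tuple X -> X, in_F C f -> monarchy f).

End ChoiceFunctions.

From mathcomp Require Import all_boot all_fingroup zify.
Set Implicit Arguments. Unset Strict Implicit. Unset Printing Implicit Defensive.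

(* Symmetry of the family lets one move any three distinct points
   x, y, z to a position where some c in C picks x on a k-set containing y but
   not z; composing c with the transposition (x y) gives a second member picking
   y there.  Since f(c1, c2) must again choose inside that k-set, every
   f in F_[2] is conservative: f(x, y) is x or y.  As f is not a projection,
   some pair is sent to its second and some pair to its first coordinate, and
   with two fresh points these can be made disjoint.  Conjugating f by a
   permutation carrying (a1, a2, b1, b2) onto these four points preserves
   membership in F_[2] and yields the claim. *)

Lemma uniq_perm_map (T : finType) (s t : seq T) :
  uniq s -> uniq t -> size s = size t -> exists pi : {perm T}, map pi s = t.
Proof.
elim: s t => [|x s IHs] [|y t] //=; first by exists 1%g.
move=> /andP[xs us] /andP[yt ut] [st].
have [sg sgs] := IHs t us ut st.
exists (sg * tperm (sg x) y)%g; rewrite permM tpermL; congr cons.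
rewrite -[RHS]sgs; apply/eq_in_map => z zs; rewrite permM tpermD //.
  by apply: contraNneq xs => /perm_inj ->.
by apply: contraNneq yt => ->; rewrite -sgs map_f.
Qed.

Lemma exists_two_fresh (T : finType) (s : seq T) : size s + 2 <= #|T| ->
  exists u v, [/\ u \notin s, v \notin s & u != v].
Proof.
move=> hs; have : 1 < #|~: [set x in s]|.
  have := cardsC [set x in s]; have : #|[set x in s]| <= size s.
    by rewrite cardsE card_size.
  lia.
case/card_gt1P => u [v [su sv uv]]; exists u, v.
by move: su sv; rewrite !inE.
Qed.

Lemma tuple2_eta (T : Type) (t : 2.-tuple T) : t = [tuple tnth t ord0; tnth t ord_max].
Proof. by apply: val_inj; case: t => [[|a [|b []]]]. Qed.

Section KSets.
Variables (X : finType) (k : nat).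

Lemma kset_inhabited : k <= #|X| -> inhabited (kset X k).
Proof.
move=> kX; have : 0 < #|[set A : {set X} | #|A| == k]| by rewrite card_draws bin_gt0.
by rewrite card_gt0 => /set0Pn[A]; rewrite inE => kA; exact: (inhabits (exist _ A kA)).
Qed.

Lemma kset_perm_val (pi : {perm X}) (Y : kset X k) : val (kset_perm pi Y) = pi @: val Y.
Proof. by rewrite insubdK // unfold_in card_imset ?(valP Y) //; apply: perm_inj. Qed.

Lemma kset_permK (pi : {perm X}) : cancel (kset_perm pi) (kset_perm (k := k) pi^-1).
Proof.
move=> Y; apply: val_inj; rewrite !kset_perm_val -imset_comp -[RHS]imset_id.
by apply: eq_imset => x /=; rewrite permK.
Qed.

Lemma kset_permKV (pi : {perm X}) : cancel (kset_perm pi^-1) (kset_perm (k := k) pi).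
Proof. by move=> Y; rewrite -{1}[pi]invgK kset_permK. Qed.

End KSets.

Section Conjugation.
Variables (X : finType) (k : nat) (C : {set kfun X k}).
Hypothesis hCsym : symmetric_family C.

Definition conj_fun r (pi : {perm X}) (f : r.-tuple X -> X) : r.-tuple X -> X :=
  fun x => (pi^-1)%g (f (map_tuple pi x)).

Lemma conj_fun2 (pi : {perm X}) (f : 2.-tuple X -> X) (a b : X) :
  conj_fun pi f [tuple a; b] = (pi^-1)%g (f [tuple pi a; pi b]).
Proof. by rewrite /conj_fun; congr (_ (f _)); apply: val_inj. Qed.

Lemma in_F_conj r (pi : {perm X}) (f : r.-tuple X -> X) :
  in_F C f -> in_F C (conj_fun pi f).
Proof.
case=> f_idem f_closed; rewrite /conj_fun; split=> [a | cs csC].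
  have -> : map_tuple pi (nseq_tuple r a) = nseq_tuple r (pi a).
    by apply: val_inj; rewrite /= map_nseq.
  by rewrite f_idem permK.
pose ds := map_tuple (perm_act pi^-1) cs.
have dsC i : tnth ds i \in C by rewrite tnth_map; apply: hCsym.
have := hCsym pi (f_closed ds dsC); congr (_ \in C).
apply/ffunP => Y; rewrite !ffunE; congr (_ (f _)).
apply: val_inj; rewrite /= -!map_comp; apply: eq_map => c /=.
by rewrite ffunE kset_permK invgK.
Qed.

Lemma conj_fun_relabel (f : 2.-tuple X -> X) (a1 a2 b1 b2 P Q S T : X) :
  uniq [:: a1; a2; b1; b2] -> uniq [:: P; Q; S; T] ->
  f [tuple P; Q] = Q -> f [tuple S; T] = S ->
  exists pi : {perm X},
    conj_fun pi f [tuple a1; a2] = a2 /\ conj_fun pi f [tuple b1; b2] = b1.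
Proof.
move=> uab uPQST fPQ fST.
have [pi /= [p1 p2 p3 p4]] := uniq_perm_map uab uPQST erefl.
by exists pi; rewrite !conj_fun2 p1 p2 p3 p4 fPQ fST -p2 -p3 !permK.
Qed.

End Conjugation.

Lemma not_monarchy_witness (X : finType) r (f : r.-tuple X -> X) (i : 'I_r) :
  ~ monarchy f -> exists t, f t != tnth t i.
Proof.
move=> nmf; apply/existsP; apply: contraT => /existsPn ft.
by case: nmf; exists i => t; apply/eqP/negbNE.
Qed.

Section Conservativity.
Variables (X : finType) (k : nat) (C : {set kfun X k}).
Hypothesis hCne : C != set0.
Hypothesis hCch : forall c, c \in C -> is_choice_fun c.
Hypothesis hCsym : symmetric_family C.
Hypothesis hk : 1 < k.
Hypothesis hkX : k < #|X|.

Lemma choice_at (x y z : X) : uniq [:: x; y; z] ->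
  exists c Y, [/\ c \in C, c Y = x, y \in val Y & z \notin val Y].
Proof.
move=> uxyz; case/set0Pn: hCne => c0 c0C.
have [Y0] := kset_inhabited (ltnW hkX).
set u := c0 Y0; have uY0 : u \in val Y0 := hCch c0C Y0.
have [v] : exists v, v \in val Y0 :\ u.
  apply/set0Pn; rewrite -card_gt0.
  by have := cardsD1 u (val Y0); rewrite uY0 (eqP (valP Y0)); lia.
have [w] : exists w, w \in ~: val Y0.
  apply/set0Pn; rewrite -card_gt0.
  by have := cardsC (val Y0); rewrite (eqP (valP Y0)); lia.
rewrite !inE => wY0 /andP[vu vY0].
have uuvw : uniq [:: u; v; w].
  rewrite /= !inE negb_or eq_sym vu andbT.
  by apply/andP; split; apply: contraNneq wY0 => <-.
have [pi /= [px py pz]] := uniq_perm_map uxyz uuvw erefl.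
exists (perm_act pi c0), (kset_perm pi^-1 Y0); split; first exact: hCsym.
- by rewrite ffunE kset_permKV -/u -px permK.
- by rewrite kset_perm_val -[y](permK pi) py imset_f.
- by rewrite kset_perm_val -[z](permK pi) pz mem_imset //; apply: perm_inj.
Qed.

Lemma choice_pair_at (x y z : X) : uniq [:: x; y; z] ->
  exists c1 c2 Y, [/\ c1 \in C, c2 \in C, c1 Y = x, c2 Y = y & z \notin val Y].
Proof.
move=> uxyz; have [c [Y [cC cY yY zY]]] := choice_at uxyz.
have xY : x \in val Y by rewrite -cY hCch.
have tY : kset_perm (tperm x y) Y = Y.
  apply: val_inj; rewrite kset_perm_val; apply: im_perm_on.
  by apply: subset_trans (tperm_on x y) _; rewrite subUset !sub1set xY yY.
exists c, (perm_act (tperm x y) c), Y; split=> //; first exact: hCsym.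
by rewrite ffunE tY cY tpermV tpermL.
Qed.

Lemma in_F2_conservative (f : 2.-tuple X -> X) : in_F C f ->
  forall x y, f [tuple x; y] = x \/ f [tuple x; y] = y.
Proof.
case=> f_idem f_closed x y.
have [<-|xy] := eqVneq x y.
  by left; rewrite -[RHS](f_idem x); congr f; apply: val_inj.
set z := f _; have [zx|zx] := eqVneq z x; first by left.
have [zy|zy] := eqVneq z y; first by right.
have uxyz : uniq [:: x; y; z] by rewrite /= !inE negb_or xy !(eq_sym _ z) zx zy.
have [c1 [c2 [Y [c1C c2C c1Y c2Y zY]]]] := choice_pair_at uxyz.
have c12C (i : 'I_2) : tnth [tuple c1; c2] i \in C by case: i => [[|[|]]].
have := hCch (f_closed _ c12C) Y; rewrite ffunE.
have -> : map_tuple (fun c : kfun X k => c Y) [tuple c1; c2] = [tuple x; y].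
  by apply: val_inj; rewrite /= c1Y c2Y.
by rewrite (negbTE zY).
Qed.

Lemma in_F2_not_left (f : 2.-tuple X -> X) (x y : X) : in_F C f ->
  f [tuple x; y] != x -> x != y /\ f [tuple x; y] = y.
Proof.
move=> hf fx; have [fxy|fxy] := in_F2_conservative hf x y; first by rewrite fxy eqxx in fx.
by split=> //; apply: contraNneq fx => xy; rewrite fxy xy.
Qed.

Lemma in_F2_not_right (f : 2.-tuple X -> X) (x y : X) : in_F C f ->
  f [tuple x; y] != y -> x != y /\ f [tuple x; y] = x.
Proof.
move=> hf fy; have [fxy|fxy] := in_F2_conservative hf x y; last by rewrite fxy eqxx in fy.
by split=> //; apply: contraNneq fy => xy; rewrite fxy xy.
Qed.

Lemma in_F2_disjoint_witnesses (f : 2.-tuple X -> X) : 6 <= #|X| ->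
  in_F C f -> ~ monarchy f ->
  exists P Q S T, [/\ uniq [:: P; Q; S; T], f [tuple P; Q] = Q & f [tuple S; T] = S].
Proof.
move=> hX hf nmf.
have [t0] := not_monarchy_witness ord0 nmf; rewrite {1}(tuple2_eta t0).
set P := tnth t0 ord0; set Q := tnth t0 ord_max.
move=> /(in_F2_not_left hf)[PQ fPQ].
have [t1] := not_monarchy_witness ord_max nmf; rewrite {1}(tuple2_eta t1).
set S := tnth t1 ord0; set T := tnth t1 ord_max.
move=> /(in_F2_not_right hf)[ST fST].
have [u [v []]] := exists_two_fresh (s := [:: P; Q; S; T]) hX.
rewrite !inE !negb_or => /and4P[uP uQ uS uT] /and4P[vP vQ vS vT] uv.
have [fuv|fuv] := in_F2_conservative hf u v.
- exists P, Q, u, v; split=> //=.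
  by rewrite !inE !negb_or PQ uv !(eq_sym _ u) !(eq_sym _ v) uP uQ vP vQ.
- exists u, v, S, T; split=> //=.
  by rewrite !inE !negb_or uv ST uS uT vS vT.
Qed.

End Conservativity.

Theorem claim13p3 (X : finType) (k : nat) (C : {set kfun X k})
  (hX : 5 <= #|X|) (hk1 : 5 < k) (hk2 : k < #|X| - 5)
  (hCne : C != set0)
  (hCch : forall c, c \in C -> is_choice_fun c)
  (hCsym : symmetric_family C)
  (hr : rF_eq C 2)
  (a1 a2 : X) (ha : a1 != a2) :
  exists f : 2.-tuple X -> X, in_F C f /\
    exists b1 b2 : X,
      f [tuple a1; a2] = a2 /\
      uniq [:: a1; a2; b1; b2] /\
      f [tuple b1; b2] = b1 /\ b1 != b2.
Proof.
have [hk hkX hX6] : [/\ 1 < k, k < #|X| & 6 <= #|X|] by split; lia.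
have [_ [[f [hf nmf]] _]] := hr.
have [P [Q [S [T [uPQST fPQ fST]]]]] :=
  in_F2_disjoint_witnesses hCne hCch hCsym hk hkX hX6 hf nmf.
have [b1 [b2 [b1a b2a b12]]] := @exists_two_fresh X [:: a1; a2] (ltnW hX).
have uab : uniq [:: a1; a2; b1; b2].
  rewrite -[_ :: _]/([:: a1; a2] ++ [:: b1; b2]) cat_uniq /=.
  by rewrite (negbTE b1a) (negbTE b2a) !mem_seq1 ha b12.
have [pi [fa fb]] := conj_fun_relabel uab uPQST fPQ fST.
exists (conj_fun pi f); split; first exact: in_F_conj.
by exists b1, b2.
Qed.
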